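(* The category of exact $\mathfrak{K}$-modules $M$ with $\alpha_{12}=0$ and $\alpha_{21}=0$ is equivalent to the category of $\mathbb{Z}/2$-graded cohomologically trivial $\mathfrak{S}$-modules, via $M\mapsto(M_0,t_0)$. A homomorphism $f_0\colon M_0\to L_0$ between two $\mathbb{Z}/2$-graded cohomologically trivial $\mathfrak{S}$-modules induces an injective or surjective homomorphism of exact $\mathfrak{K}$-modules if and only if $f_0$ is injective or surjective, respectively.
   Context: Fix a prime $p$, $N(x)=1+x+\dots+x^{p-1}$, $\mathfrak{S}=\mathbb{Z}[t]/(t^p-1)$. A $\mathfrak{K}$-module $M$ amounts to $\mathbb{Z}/2$-graded abelian groups $M_0,M_1,M_2$ with homomorphisms $\alpha_{jk}\colon M_k\to M_j$ ($j\neq k$; $\alpha_{12},\alpha_{21}$ grading-reversing, others grading-preserving) with $\alpha_{jk}\alpha_{km}=0$ for $\{j,k,m\}=\{0,1,2\}$ and, for $t_0:=1-\alpha_{02}\alpha_{20}$ on $M_0$, $s_1:=1-\alpha_{12}\alpha_{21}$ on $M_1$, $t_2:=1-\alpha_{20}\alpha_{02}$, $s_2:=1-\alpha_{21}\alpha_{12}$ on $M_2$: $\alpha_{01}\alpha_{10}=N(t_0)$, $\alpha_{10}\alpha_{01}=N(s_1)$, $N(t_2)+N(s_2)=p$; morphisms are triples of grading-preserving maps commuting with all $\alpha_{jk}$. $M$ is exact if the cyclic sequences $M_0\xrightarrow{\alpha_{10}}M_1\xrightarrow{\alpha_{21}}M_2\xrightarrow{\alpha_{02}}M_0$ and $M_0\xrightarrow{\alpha_{20}}M_2\xrightarrow{\alpha_{12}}M_1\xrightarrow{\alpha_{01}}M_0$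 are exact. An $\mathfrak{S}$-module is cohomologically trivial if $\ker(1-t)=\operatorname{im}N(t)$ and $\operatorname{im}(1-t)=\ker N(t)$. *)

From HB Require Import structures.
From mathcomp Require Import all_boot all_order all_algebra.
Set Implicit Arguments. Unset Strict Implicit. Unset Printing Implicit Defensive.
Import GRing.Theory.
Local Open Scope ring_scope.

Definition hom (U V : zmodType) (f : U -> V) : Prop :=
  forall x y, f (x + y) = f x + f y.

(* A Z/2-grading on an abelian group V is a decomposition V = V^0 (+) V^1,
   encoded by the additive idempotent projection e onto V^0 (along V^1). *)
Definition grading (V : zmodType) (e : V -> V) : Prop :=
  hom e /\ forall x, e (e x) = e x.

Definition gpres (U V : zmodType) (eU : U -> U) (eV : V -> V) (f : U -> V) :=
  forall x, f (eU x) = eV (f x).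
(* grading-reversing map: maps U^0 to V^1 and U^1 to V^0 *)
Definition grev (U V : zmodType) (eU : U -> U) (eV : V -> V) (f : U -> V) :=
  forall x, f (eU x) = f x - eV (f x).

Definition Nop (p : nat) (V : zmodType) (t : V -> V) (x : V) : V :=
  \sum_(i < p) iter i t x.

Unset Implicit Arguments.
Record Kdata := KData {
  K0 : zmodType; K1 : zmodType; K2 : zmodType;
  e0 : K0 -> K0; e1 : K1 -> K1; e2 : K2 -> K2;
  a01 : K1 -> K0; a02 : K2 -> K0;
  a10 : K0 -> K1; a12 : K2 -> K1;
  a20 : K0 -> K2; a21 : K1 -> K2 }.
Set Implicit Arguments.

Definition t0 (M : Kdata) (x : K0 M) : K0 M := x - a02 M (a20 M x).
Definition s1 (M : Kdata) (x : K1 M) : K1 M := x - a12 M (a21 M x).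
Definition t2 (M : Kdata) (x : K2 M) : K2 M := x - a20 M (a02 M x).
Definition s2 (M : Kdata) (x : K2 M) : K2 M := x - a21 M (a12 M x).

Definition is_Kmod (p : nat) (M : Kdata) : Prop :=
  [/\ grading (e0 M) /\ grading (e1 M) /\ grading (e2 M),
      [/\ hom (a01 M), hom (a02 M) & hom (a10 M)] /\
      [/\ hom (a12 M), hom (a20 M) & hom (a21 M)],
      [/\ gpres (e1 M) (e0 M) (a01 M), gpres (e2 M) (e0 M) (a02 M) &
          gpres (e0 M) (e1 M) (a10 M)] /\ [/\ grev (e2 M) (e1 M) (a12 M),
          gpres (e0 M) (e2 M) (a20 M) & grev (e1 M) (e2 M) (a21 M)],
      [/\ (forall x, a01 M (a12 M x) = 0), (forall x, a02 M (a21 M x) = 0) &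
          (forall x, a10 M (a02 M x) = 0)] /\ [/\ (forall x, a12 M (a20 M x) = 0),
          (forall x, a20 M (a01 M x) = 0) & (forall x, a21 M (a10 M x) = 0)] &
      [/\ (forall x, a01 M (a10 M x) = Nop p (@t0 M) x),
          (forall x, a10 M (a01 M x) = Nop p (@s1 M) x) &
          (forall x, Nop p (@t2 M) x + Nop p (@s2 M) x = x *+ p)]].

Definition exact_at (U V W : zmodType) (f : U -> V) (g : V -> W) : Prop :=
  forall y, (exists x, f x = y) <-> g y = 0.

Definition Kexact (M : Kdata) : Prop :=
  [/\ exact_at (a10 M) (a21 M), exact_at (a21 M) (a02 M) & exact_at (a02 M) (a10 M)] /\
  [/\ exact_at (a20 M) (a12 M), exact_at (a12 M) (a01 M) & exact_at (a01 M) (a20 M)].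

Definition goodK (p : nat) (M : Kdata) : Prop :=
  [/\ is_Kmod p M, Kexact M, ((forall x, a12 M x = 0)) & ((forall x, a21 M x = 0))].

Definition Kmor (M L : Kdata) (f0 : K0 M -> K0 L) (f1 : K1 M -> K1 L)
    (f2 : K2 M -> K2 L) : Prop :=
  [/\ hom f0 /\ hom f1 /\ hom f2,
      gpres (e0 M) (e0 L) f0 /\ gpres (e1 M) (e1 L) f1 /\ gpres (e2 M) (e2 L) f2 &
      [/\ (forall x, f0 (a01 M x) = a01 L (f1 x)), (forall x, f0 (a02 M x) = a02 L (f2 x)) &
          (forall x, f1 (a10 M x) = a10 L (f0 x))] /\ [/\ (forall x, f1 (a12 M x) = a12 L (f2 x)),
          (forall x, f2 (a20 M x) = a20 L (f0 x)) & (forall x, f2 (a21 M x) = a21 L (f1 x))]].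

(* Z/2-graded S-modules, S = Z[t]/(t^p - 1): graded group with a grading-preserving
   additive t satisfying t^p = 1 *)
Definition is_Smod (p : nat) (A : zmodType) (e t : A -> A) : Prop :=
  [/\ grading e, hom t, gpres e e t & (forall x, iter p t x = x)].

Definition coh_trivial (p : nat) (A : zmodType) (t : A -> A) : Prop :=
  forall x, ((x - t x = 0) <-> exists y, Nop p t y = x) /\
            ((exists y, y - t y = x) <-> Nop p t x = 0).

Definition Smor (A B : zmodType) (eA tA : A -> A) (eB tB : B -> B) (f : A -> B) :=
  [/\ hom f, gpres eA eB f & (forall x, f (tA x) = tB (f x))].

Definition surj (A B : Type) (f : A -> B) : Prop := forall y, exists x, f x = y.

(* For an exact K-module with [alpha12 = alpha21 = 0], exactness makes
   [alpha10], [alpha20] surjective and [alpha01], [alpha02] injective, so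
   [N(t0) = alpha01 alpha10] and [1 - t0 = alpha02 alpha20] are image
   factorizations: [M1 = N(t0) M0] and [M2 = (1 - t0) M0]. Exactness at [M0]
   then says precisely that [ker (1 - t0) = im N(t0)] and
   [im (1 - t0) = ker N(t0)]; conversely a cohomologically trivial [(A, t)]
   yields such a K-module with [M1 = N(t) A] and [M2 = (1 - t) A]. Since [M1]
   and [M2] are quotients of [M0], morphisms extend uniquely from [M0], and
   injectivity (resp. surjectivity) transfers through the injections
   [alpha01], [alpha02] (resp. the surjections [alpha10], [alpha20]). *)

From HB Require Import structures.
From mathcomp Require Import all_boot all_order all_algebra boolp.
Set Implicit Arguments. Unset Strict Implicit. Unset Printing Implicit Defensive.
Import GRing.Theory.
Local Open Scope ring_scope.

Section Hom.
Variables (U V : zmodType) (f : U -> V).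

Lemma hom_zmod_morphism : hom f -> zmod_morphism f.
Proof. by move=> hf x y; apply/eqP; rewrite eq_sym subr_eq -hf subrK. Qed.

Definition additive_of_hom (hf : hom f) : {additive U -> V} :=
  HB.pack f (GRing.isZmodMorphism.Build U V f (hom_zmod_morphism hf)).

Hypothesis hf : hom f.

Lemma hom0 : f 0 = 0. Proof. exact: raddf0 (additive_of_hom hf). Qed.

Lemma homB x y : f (x - y) = f x - f y.
Proof. exact: (raddfB (additive_of_hom hf) x y). Qed.

Lemma hom_sum I r (P : pred I) (F : I -> U) :
  f (\sum_(i <- r | P i) F i) = \sum_(i <- r | P i) f (F i).
Proof. exact: (raddf_sum (additive_of_hom hf) r P F). Qed.

Lemma hom_inj : (forall x, f x = 0 -> x = 0) -> injective f.
Proof. exact: (raddf_inj (f := additive_of_hom hf)). Qed.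

End Hom.

Lemma hom_null (U V : zmodType) : hom (fun _ : U => 0 : V).
Proof. by move=> x y; rewrite addr0. Qed.

Lemma hom_iter (V : zmodType) (t : V -> V) n : hom t -> hom (iter n t).
Proof. by move=> ht; elim: n => [|n IHn] x y //=; rewrite IHn ht. Qed.

Lemma hom_subr_id (V : zmodType) (t : V -> V) : hom t -> hom (fun x => x - t x).
Proof. by move=> ht x y; rewrite ht opprD addrACA. Qed.

Lemma grev_null (U V : zmodType) (eU : U -> U) (eV : V -> V) :
  hom eV -> grev eU eV (fun=> 0).
Proof. by move=> heV x; rewrite hom0 // subr0. Qed.

Section Norm.
Variables (p : nat) (V : zmodType) (t : V -> V).

Lemma eq_Nop t' : t =1 t' -> Nop p t =1 Nop p t'.
Proof. by move=> tt' x; apply: eq_bigr => i _; apply: eq_iter. Qed.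

Lemma Nop_fixed x : t x = x -> Nop p t x = x *+ p.
Proof.
move=> tx; rewrite /Nop (eq_bigr (fun=> x)) ?sumr_const ?card_ord // => i _.
by elim: (nat_of_ord i) => //= n ->.
Qed.

Hypothesis ht : hom t.

Lemma hom_Nop : hom (Nop p t).
Proof. by move=> x y; rewrite /Nop -big_split; apply: eq_bigr => i _; apply: hom_iter. Qed.

Lemma iter_id_of_Nop_fixed :
  (forall x, t (Nop p t x) = Nop p t x) -> forall x, iter p t x = x.
Proof.
move=> Nfix x; apply/eqP; rewrite -subr_eq0.
have <- : t (Nop p t x) - Nop p t x = iter p t x - x.
  rewrite /Nop hom_sum // -sumrB.
  rewrite (eq_bigr (fun i : 'I_p => iter i.+1 t x - iter i t x)) //.
  by rewrite -(big_mkord xpredT (fun i => iter i.+1 t x - iter i t x)) telescope_sumr.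
by rewrite Nfix subrr.
Qed.

End Norm.

Lemma map_Nop p (U V : zmodType) (t : U -> U) (t' : V -> V) (f : U -> V) :
  hom f -> gpres t t' f -> forall x, f (Nop p t x) = Nop p t' (f x).
Proof.
move=> hf ft x; rewrite /Nop hom_sum //; apply: eq_bigr => i _.
by elim: (nat_of_ord i) => //= n <-.
Qed.

Lemma coh_trivialE p (V : zmodType) (t : V -> V) :
  coh_trivial p t <->
  exact_at (Nop p t) (fun x => x - t x) /\ exact_at (fun x => x - t x) (Nop p t).
Proof.
split=> [ct | [exN exD] x]; last by split; [apply: iff_sym | ].
by split=> x; have [? ?] := ct x; [apply: iff_sym | ].
Qed.

Section Exactness.
Variables (U V W : zmodType).

Lemma eq_exact_at (f f' : U -> V) (g g' : V -> W) :
  f =1 f' -> g =1 g' -> exact_at f g <-> exact_at f' g'.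
Proof.
move=> ff' gg'.
have im y : (exists x, f x = y) <-> (exists x, f' x = y).
  by split=> -[x <-]; exists x; rewrite ff'.
by split=> ex y; move: (ex y) (im y); rewrite gg'; tauto.
Qed.

Lemma exact_at_null_r (f : U -> V) (g : V -> W) :
  g =1 (fun=> 0) -> exact_at f g <-> surj f.
Proof. by move=> g0; split=> ex y; [apply/ex | split=> // _; apply: ex]. Qed.

Lemma exact_at_null_l (f : U -> V) (g : V -> W) : hom g ->
  f =1 (fun=> 0) -> exact_at f g <-> forall y, g y = 0 -> y = 0.
Proof.
move=> hg f0; split=> [ex y /ex [x <-] // | g_inj y]; split=> [[x <-] | /g_inj ->].
- by rewrite f0 hom0.
- by exists 0; rewrite f0.
Qed.

Lemma exact_at_comp (U' W' : zmodType) (f : U -> V) (g : V -> W)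
    (q : U' -> U) (i : W -> W') :
  surj q -> hom i -> injective i -> exact_at f g ->
  exact_at (fun x => f (q x)) (fun y => i (g y)).
Proof.
move=> q_surj hi i_inj ex y; split=> [[x <-] | giy0].
  by rewrite (ex (f (q x))).1 ?hom0 //; exists (q x).
have /ex [x <-] : g y = 0 by apply: i_inj; rewrite giy0 hom0.
by have [x' <-] := q_surj x; exists x'.
Qed.

End Exactness.

Section CommutingSquares.
Variables (A B A' B' : zmodType) (f : A -> A') (g : B -> B').

Lemma comm_square_inj (i : B -> A) (i' : B' -> A') :
  (forall z, f (i z) = i' (g z)) -> injective i -> injective f -> injective g.
Proof. by move=> fi i_inj f_inj z z' gz; apply/i_inj/f_inj; rewrite !fi gz. Qed.

Lemma comm_square_surj (q : A -> B) (q' : A' -> B') :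
  (forall x, g (q x) = q' (f x)) -> surj f -> surj q' -> surj g.
Proof.
move=> gq f_surj q'_surj z'; have [y <-] := q'_surj z'; have [x <-] := f_surj y.
by exists (q x).
Qed.

End CommutingSquares.

Section Lift.
Variables (A B A' B' : zmodType) (q : A -> B) (q' : A' -> B') (g : A -> A').
Hypothesis q_surj : surj q.

Lemma hom_lift : hom q -> hom q' -> hom g -> (forall x, q x = 0 -> q' (g x) = 0) ->
  exists2 f : B -> B', hom f & forall x, f (q x) = q' (g x).
Proof.
move=> hq hq' hg ker_sub; have [s sK] := choice q_surj.
have s_lift x : q' (g (s (q x))) = q' (g x).
  by apply/eqP; rewrite -subr_eq0 -!homB //; apply/eqP/ker_sub; rewrite homB // sK subrr.
exists (fun z => q' (g (s z))) => // z z'.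
by rewrite -[in LHS](sK z) -[in LHS](sK z') -hq s_lift hg hq'.
Qed.

Lemma gpres_lift (f : B -> B') (h : A -> A) (hB : B -> B) (k : A' -> A') (kB : B' -> B') :
  (forall x, f (q x) = q' (g x)) ->
  gpres h hB q -> gpres k kB q' -> gpres h k g -> gpres hB kB f.
Proof. by move=> fq qh q'k gh z; have [x <-] := q_surj z; rewrite -qh !fq gh q'k. Qed.

End Lift.

Lemma subr_t0 (M : Kdata) (x : K0 M) : x - t0 x = a02 M (a20 M x).
Proof. exact: subKr. Qed.

Section GoodKmodule.
Variables (p : nat) (M : Kdata).
Hypothesis HM : goodK p M.

Lemma goodK_hom : [/\ hom (a01 M), hom (a02 M), hom (a10 M) & hom (a20 M)].
Proof. by case: HM => [[_ [[? ? ?] [_ ? _]] _ _ _] _ _ _]. Qed.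

Lemma goodK_gpres : [/\ gpres (e1 M) (e0 M) (a01 M), gpres (e2 M) (e0 M) (a02 M),
  gpres (e0 M) (e1 M) (a10 M) & gpres (e0 M) (e2 M) (a20 M)].
Proof. by case: HM => [[_ _ [[? ? ?] [_ ? _]] _ _] _ _ _]. Qed.

Lemma Nop_t0 x : Nop p (@t0 M) x = a01 M (a10 M x).
Proof. by case: HM => [[_ _ _ _ [-> _ _]] _ _ _]. Qed.

Lemma a10_surj : surj (a10 M).
Proof. by case: HM => _ [[ex _ _] _] _ a21_0; apply/(exact_at_null_r _ a21_0). Qed.

Lemma a20_surj : surj (a20 M).
Proof. by case: HM => _ [_ [ex _ _]] a12_0 _; apply/(exact_at_null_r _ a12_0). Qed.

Lemma a01_inj : injective (a01 M).
Proof.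
have [h01 _ _ _] := goodK_hom; case: HM => _ [_ [_ ex _]] a12_0 _.
exact/(hom_inj h01)/(exact_at_null_l h01 a12_0).
Qed.

Lemma a02_inj : injective (a02 M).
Proof.
have [_ h02 _ _] := goodK_hom; case: HM => _ [[_ ex _] _] _ a21_0.
exact/(hom_inj h02)/(exact_at_null_l h02 a21_0).
Qed.

Lemma exact_a02_a10 : exact_at (a02 M) (a10 M).
Proof. by case: HM => _ [[_ _ ?] _]. Qed.

Lemma exact_a01_a20 : exact_at (a01 M) (a20 M).
Proof. by case: HM => _ [_ [_ _ ?]]. Qed.

Lemma a10_a02 z : a10 M (a02 M z) = 0.
Proof. by apply/exact_a02_a10; exists z. Qed.

Lemma a20_a01 z : a20 M (a01 M z) = 0.
Proof. by apply/exact_a01_a20; exists z. Qed.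

Lemma goodK_Smod : is_Smod p (e0 M) (@t0 M).
Proof.
have [_ h02 _ h20] := goodK_hom; have [_ g02 _ g20] := goodK_gpres.
have ge0 : grading (e0 M) by case: HM => [[[? _] _ _ _ _] _ _ _].
have ht0 : hom (@t0 M) by apply: hom_subr_id => x y; rewrite h20 h02.
split=> // [x|]; first by rewrite /t0 g20 g02 homB //; case: ge0.
apply: iter_id_of_Nop_fixed => // x.
by rewrite Nop_t0 /t0 a20_a01 hom0 ?subr0.
Qed.

Lemma goodK_coh_trivial : coh_trivial p (@t0 M).
Proof.
have [h01 h02 _ _] := goodK_hom; apply/coh_trivialE; split.
  apply/(eq_exact_at Nop_t0 (@subr_t0 M)).
  exact: exact_at_comp a10_surj h02 a02_inj exact_a01_a20.
apply/(eq_exact_at (@subr_t0 M) Nop_t0).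
exact: exact_at_comp a20_surj h01 a01_inj exact_a02_a10.
Qed.

End GoodKmodule.

Section Morphisms.
Variables (M L : Kdata).

Lemma Kmor_Smor f0 f1 f2 : @Kmor M L f0 f1 f2 -> Smor (e0 M) (@t0 M) (e0 L) (@t0 L) f0.
Proof.
by case=> [[h0 _] [g0 _] [[_ c02 _] [_ c20 _]]]; split=> // x; rewrite /t0 homB // c02 c20.
Qed.

Variable p : nat.
Hypotheses (HM : goodK p M) (HL : goodK p L).

Lemma Kmor_faithful f0 f1 f2 f0' f1' f2' : @Kmor M L f0 f1 f2 -> @Kmor M L f0' f1' f2' ->
  f0 =1 f0' -> f1 =1 f1' /\ f2 =1 f2'.
Proof.
case=> _ _ [[_ _ c10] [_ c20 _]]; case=> _ _ [[_ _ c10'] [_ c20' _]] ff'.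
split=> z; [have [x <-] := a10_surj HM z | have [x <-] := a20_surj HM z].
  by rewrite c10 c10' ff'.
by rewrite c20 c20' ff'.
Qed.

Lemma Kmor_injective f0 f1 f2 : @Kmor M L f0 f1 f2 ->
  injective f0 -> injective f1 /\ injective f2.
Proof.
case=> _ _ [[c01 c02 _] _] f0_inj.
by split; [apply: comm_square_inj c01 (a01_inj HM) f0_inj |
           apply: comm_square_inj c02 (a02_inj HM) f0_inj].
Qed.

Lemma Kmor_surj f0 f1 f2 : @Kmor M L f0 f1 f2 -> surj f0 -> surj f1 /\ surj f2.
Proof.
case=> _ _ [[_ _ c10] [_ c20 _]] f0_surj.
by split; [apply: comm_square_surj c10 f0_surj (a10_surj HL) |
           apply: comm_square_surj c20 f0_surj (a20_surj HL)].
Qed.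

Lemma Smor_lift g : Smor (e0 M) (@t0 M) (e0 L) (@t0 L) g -> exists f1 f2, @Kmor M L g f1 f2.
Proof.
move=> [hg gg gt].
have [_ h02 h10 h20] := goodK_hom HM; have [_ h02' h10' h20'] := goodK_hom HL.
have [_ _ g10 g20] := goodK_gpres HM; have [_ _ g10' g20'] := goodK_gpres HL.
have g_subr_t0 x : g (x - t0 x) = g x - t0 (g x) by rewrite homB // gt.
have [f1 hf1 f1E] : exists2 f1, hom f1 & forall x, f1 (a10 M x) = a10 L (g x).
  apply: hom_lift (a10_surj HM) _ _ _ _ => // x /(exact_a02_a10 HM) [v <-].
  by have [w <-] := a20_surj HM v; rewrite -subr_t0 g_subr_t0 subr_t0 (a10_a02 HL).
have [f2 hf2 f2E] : exists2 f2, hom f2 & forall x, f2 (a20 M x) = a20 L (g x).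
  apply: hom_lift (a20_surj HM) _ _ _ _ => // x x0; apply: (a02_inj HL).
  by rewrite -subr_t0 -g_subr_t0 subr_t0 x0 !hom0.
exists f1, f2; split.
- by split.
- split=> //; split.
    exact: (gpres_lift (a10_surj HM) f1E g10 g10' gg).
  exact: (gpres_lift (a20_surj HM) f2E g20 g20' gg).
- split; split=> // z.
  + by have [x <-] := a10_surj HM z; rewrite f1E -(Nop_t0 HM) -(Nop_t0 HL) (map_Nop p hg gt).
  + by have [x <-] := a20_surj HM z; rewrite f2E -!subr_t0 g_subr_t0.
  + by case: HM HL => _ _ -> _ [_ _ -> _]; rewrite hom0.
  + by case: HM HL => _ _ _ -> [_ _ _ ->]; rewrite hom0.
Qed.

End Morphisms.

Section ImageGroup.
Variables (U V : zmodType) (f : {additive U -> V}).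

Definition image_pred : {pred V} := fun y => `[< exists x, f x = y >].

Lemma image_predP y : reflect (exists x, f x = y) (y \in image_pred).
Proof. exact: asboolP. Qed.

Lemma image_pred_zmod_closed : zmod_closed image_pred.
Proof.
split=> [|_ _ /image_predP[x <-] /image_predP[y <-]]; apply/image_predP.
  by exists 0; rewrite raddf0.
by exists (x - y); rewrite raddfB.
Qed.

Inductive image_group : predArgType := ImageGroup y of y \in image_pred.
Definition image_val (z : image_group) : V := let: ImageGroup y _ := z in y.
HB.instance Definition _ := [isSub of image_group for image_val].
HB.instance Definition _ := [Choice of image_group by <:].
HB.instance Definition _ :=
  GRing.SubChoice_isSubZmodule.Build V image_pred image_group image_pred_zmod_closed.

Lemma mem_image_pred x : f x \in image_pred.
Proof. by apply/image_predP; exists x. Qed.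

Definition corestr (x : U) : image_group := Sub (f x) (mem_image_pred x).

Lemma val_corestr x : val (corestr x) = f x.
Proof. exact: SubK. Qed.

Lemma hom_val : hom (val : image_group -> V).
Proof. exact: raddfD. Qed.

Lemma val_eq0 (z : image_group) : val z = 0 -> z = 0.
Proof. by move=> z0; apply: val_inj; rewrite z0 raddf0. Qed.

Lemma hom_corestr : hom corestr.
Proof. by move=> x y; apply: val_inj; rewrite hom_val !val_corestr raddfD. Qed.

Lemma corestr_surj : surj corestr.
Proof.
by move=> z; have /image_predP[x fx] := valP z; exists x; apply: val_inj; rewrite val_corestr.
Qed.

Definition image_restr (h : V -> V) (z : image_group) : image_group :=
  insubd z (h (val z)).

Section Restriction.
Variables (h : V -> V) (hU : U -> U).
Hypothesis fh : forall x, h (f x) = f (hU x).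

Lemma gpres_val_restr : gpres (image_restr h) h val.
Proof.
move=> z; rewrite insubdK //; have /image_predP[x <-] := valP z.
by rewrite fh mem_image_pred.
Qed.

Lemma gpres_corestr_restr : gpres hU (image_restr h) corestr.
Proof. by move=> x; apply: val_inj; rewrite gpres_val_restr !val_corestr fh. Qed.

Lemma grading_restr : grading h -> grading (image_restr h).
Proof.
case=> hh hhh; split=> [z z' | z]; apply: val_inj.
  by rewrite hom_val !gpres_val_restr hom_val hh.
by rewrite !gpres_val_restr hhh.
Qed.

End Restriction.

End ImageGroup.

Arguments hom_val {U V f}.

Lemma exact_at_val_corestr (U V W : zmodType) (f : {additive U -> V}) (g : {additive V -> W}) :
  exact_at f g -> exact_at (val : image_group f -> V) (corestr g).
Proof.
move=> ex y; split=> [[z <-] | gy0].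
  by apply: val_eq0; rewrite val_corestr; apply/ex/image_predP/valP.
have /ex [x fx] : g y = 0 by rewrite -val_corestr gy0 raddf0.
by exists (corestr f x); rewrite val_corestr.
Qed.

Section Realization.
Variables (p : nat) (A : zmodType) (e t : A -> A).
Hypotheses (ge : grading e) (ht : hom t) (et : gpres e e t) (ct : coh_trivial p t).

Definition tnorm : {additive A -> A} := additive_of_hom (hom_Nop p ht).
Definition tdiff : {additive A -> A} := additive_of_hom (hom_subr_id ht).

Definition Krealize : Kdata :=
  KData A (image_group tnorm) (image_group tdiff) e (image_restr e) (image_restr e)
    val val (corestr tnorm) (fun=> 0) (corestr tdiff) (fun=> 0).

Lemma e_tnorm x : e (tnorm x) = tnorm (e x).
Proof. exact: (map_Nop p ge.1 (fun y => esym (et y)) x). Qed.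

Lemma e_tdiff x : e (tdiff x) = tdiff (e x).
Proof. by rewrite /= homB ?et //; case: ge. Qed.

Lemma exact_tnorm_tdiff : exact_at tnorm tdiff.
Proof. exact: (proj1 (coh_trivialE p t) ct).1. Qed.

Lemma exact_tdiff_tnorm : exact_at tdiff tnorm.
Proof. exact: (proj1 (coh_trivialE p t) ct).2. Qed.

Lemma tnorm_fixed (z : image_group tnorm) : t (val z) = val z.
Proof.
apply/esym/eqP; rewrite -subr_eq0; apply/eqP/exact_tnorm_tdiff.
exact/image_predP/valP.
Qed.

Lemma Nop_tdiff (z : image_group tdiff) : Nop p t (val z) = 0.
Proof. by apply/exact_tdiff_tnorm/image_predP/valP. Qed.

Lemma Krealize_t0 x : @t0 Krealize x = t x.
Proof. exact: subKr. Qed.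

Lemma Krealize_Kmod : is_Kmod p Krealize.
Proof.
have [he1 _] := grading_restr e_tnorm ge; have [he2 _] := grading_restr e_tdiff ge.
split.
- by split=> //; split; [apply: grading_restr e_tnorm ge | apply: grading_restr e_tdiff ge].
- by split; split; first [exact: hom_val | exact: hom_corestr | exact: hom_null].
- split; split; try exact: grev_null.
  + exact: gpres_val_restr e_tnorm.
  + exact: gpres_val_restr e_tdiff.
  + exact: gpres_corestr_restr e_tnorm.
  + exact: gpres_corestr_restr e_tdiff.
- split; split=> //= z; rewrite ?raddf0 //.
  + by apply/(exact_at_val_corestr exact_tdiff_tnorm); exists z.
  + by apply/(exact_at_val_corestr exact_tnorm_tdiff); exists z.
- split=> x.
  + by rewrite (eq_Nop p Krealize_t0).
  + rewrite Nop_fixed; last by rewrite /s1 /= subr0.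
    by apply: val_inj; rewrite raddfMn; exact: Nop_fixed (tnorm_fixed x).
  + rewrite [Nop p (@s2 _) x]Nop_fixed; last by rewrite /s2 /= subr0.
    suff -> : Nop p (@t2 Krealize) x = 0 by rewrite add0r.
    apply: val_eq0; rewrite (map_Nop p hom_val (t' := t)) ?Nop_tdiff // => y.
    by rewrite /t2 (homB hom_val); exact: subKr.
Qed.

Lemma Krealize_exact : Kexact Krealize.
Proof.
split; split.
- by apply/exact_at_null_r => //; apply: corestr_surj.
- by apply/(exact_at_null_l hom_val) => //; apply: val_eq0.
- exact: exact_at_val_corestr exact_tdiff_tnorm.
- by apply/exact_at_null_r => //; apply: corestr_surj.
- by apply/(exact_at_null_l hom_val) => //; apply: val_eq0.
- exact: exact_at_val_corestr exact_tnorm_tdiff.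
Qed.

Lemma goodK_Krealize : goodK p Krealize.
Proof. by split; [apply: Krealize_Kmod | apply: Krealize_exact | |]. Qed.

Lemma Smor_Krealize_id : Smor (e0 Krealize) (@t0 Krealize) e t id.
Proof. by split=> // x; rewrite Krealize_t0. Qed.

End Realization.

Theorem corollary8p2 (p : nat) (hp : prime p) :
  (* the functor M |-> (M_0, t_0) is well defined on objects *)
  (forall M : Kdata, goodK p M ->
     is_Smod p (@e0 M) (@t0 M) /\ coh_trivial p (@t0 M)) /\
  (* ... and on morphisms *)
  (forall (M L : Kdata) f0 f1 f2, goodK p M -> goodK p L -> @Kmor M L f0 f1 f2 ->
     Smor (@e0 M) (@t0 M) (@e0 L) (@t0 L) f0) /\
  (* full: every S-module map M_0 -> L_0 is induced by a K-module morphism *)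
  (forall (M L : Kdata) (g : K0 M -> K0 L), goodK p M -> goodK p L ->
     Smor (@e0 M) (@t0 M) (@e0 L) (@t0 L) g ->
     exists f1 f2, @Kmor M L g f1 f2) /\
  (* faithful *)
  (forall (M L : Kdata) f0 f1 f2 f0' f1' f2', goodK p M -> goodK p L ->
     @Kmor M L f0 f1 f2 -> @Kmor M L f0' f1' f2' -> f0 =1 f0' ->
     f1 =1 f1' /\ f2 =1 f2') /\
  (* essentially surjective *)
  (forall (A : zmodType) (e t : A -> A), is_Smod p e t -> coh_trivial p t ->
     exists M : Kdata, goodK p M /\
       exists phi : K0 M -> A, Smor (@e0 M) (@t0 M) e t phi /\ bijective phi) /\
  (* injectivity / surjectivity is detected on M_0 *)
  (forall (M L : Kdata) f0 f1 f2, goodK p M -> goodK p L -> @Kmor M L f0 f1 f2 ->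
     ((injective f0 /\ injective f1 /\ injective f2) <-> injective f0) /\
     ((surj f0 /\ surj f1 /\ surj f2) <-> surj f0)).
Proof.
split; first by move=> M HM; split; [apply: goodK_Smod | apply: goodK_coh_trivial].
split; first by move=> M L f0 f1 f2 _ _ mor; apply: Kmor_Smor mor.
split; first by move=> M L g HM HL Sg; exact (Smor_lift HM HL Sg).
split; first by move=> M L f0 f1 f2 f0' f1' f2' HM _ mor mor'; exact (Kmor_faithful HM mor mor').
split.
  move=> A e t [ge ht et _] ct; exists (Krealize p e ht); split; first exact: goodK_Krealize.
  by exists id; split; [apply: Smor_Krealize_id | exists id].
move=> M L f0 f1 f2 HM HL mor; split; split=> [[] // | H].
  by have [? ?] := Kmor_injective HM mor H.
by have [? ?] := Kmor_surj HL mor H.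
Qed.
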